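(* Let $\mathsf{T}$ be an $R$-linear triangulated category, $X$ and $Y$ objects of $\mathsf{T}$, $d$ a positive even integer and $z\in R^d$. Assume $\lambda^n(X,Y)<\infty$ for all $n\in\mathbb{Z}$. If for all $n\gg0$ there are short exact sequences $$0\to\operatorname{Hom}_{\mathsf{T}}(X,\Sigma^nY)\to\operatorname{Hom}_{\mathsf{T}}(X,\Sigma^{n+d}Y)\to\operatorname{Hom}_{\mathsf{T}}(X,\Sigma^n(Y/\!\!/z))\to0$$ (of $R^0$-modules), then $h(X,Y/\!\!/z)(n)=h(X,Y)(n+d)-h(X,Y)(n)$ for all $n\gg0$, and for every $s\ge1$ one has $\Delta^{s-1}h(X,Y/\!\!/z)(n)=\Delta^sh(X,Y)(n)$ for all $n\gg0$.
   Context: $R=\bigoplus_{n\ge 0}R^n$ is a graded-commutative Noetherian ring. $\mathsf{T}$ is a triangulated category with suspension $\Sigma$ that is $R$-linear: a graded ring homomorphism $\phi$ from $R$ to the graded center of $\mathsf{T}$ (degree-$n$ elements are natural transformations $\eta:\mathrm{id}\to\Sigma^n$ with $\eta\Sigma=(-1)^n\Sigma\eta$), giving $\phi_Y:R\to\bigoplus_n\operatorname{Hom}_{\mathsf{T}}(Y,\Sigma^nY)$; each $\operatorname{Hom}_{\mathsf{T}}(X,\Sigma^nY)$ is an $R^0$-module. $\lambda^n(X,Y)=\ell_{R^0}\operatorname{Hom}_{\mathsf{T}}(X,\Sigma^nY)$. $Y/\!\!/z$ is defined by a distinguished triangle $Y\xrightarrow{\phi_Y(z)}\Sigma^dY\to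 Y/\!\!/z\to\Sigma Y$. The (index $d$) generalized Herbrand difference is $h(X,Y)(n)=\sum_{i=0}^{d-1}(-1)^{n+i}\lambda^{n+i}(X,Y)$. The difference operator of index $d$ is $\Delta^1f(n)=f(n+d)-f(n)$, $\Delta^0f=f$, $\Delta^sf=\Delta^1(\Delta^{s-1}f)$. *)

From Stdlib Require Import ClassicalEpsilon.
From mathcomp Require Import all_boot all_algebra.
Set Implicit Arguments. Unset Strict Implicit. Unset Printing Implicit Defensive.
Import GRing.Theory.
Local Open Scope ring_scope.

Record gcring := GCRing {
  gR :> pzRingType;
  gdeg : nat -> gR -> bool;                  (* a \in R^n *)
  gdeg0 : forall n, gdeg n 0;
  gdegB : forall n a b, gdeg n a -> gdeg n b -> gdeg n (a - b);
  gdegM : forall m n a b, gdeg m a -> gdeg n b -> gdeg (m + n)%N (a * b);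
  gdeg1 : gdeg 0 1;
  gdecomp : forall x : gR, exists s : seq gR,
      (forall i, gdeg i s`_i) /\ x = \sum_(i < size s) s`_i;
  gdirect : forall s : seq gR, (forall i, gdeg i s`_i) ->
      \sum_(i < size s) s`_i = 0 -> forall i, s`_i = 0;
  gcomm : forall m n a b, gdeg m a -> gdeg n b -> a * b = (-1) ^+ (m * n) * (b * a);
  gnoeth : forall I : nat -> gR -> Prop,
      (forall k, I k 0 /\ (forall x y, I k x -> I k y -> I k (x + y))
                 /\ (forall r x, I k x -> I k (r * x) /\ I k (x * r))) ->
      (forall k x, I k x -> I k.+1 x) ->
      exists N, forall k x, (N <= k)%N -> I k x -> I N x
}.

Record addcat := AddCat {
  Obj : Type;
  Mor : Obj -> Obj -> zmodType;
  comp : forall X Y Z : Obj, Mor Y Z -> Mor X Y -> Mor X Z;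
  idm : forall X : Obj, Mor X X;
  compA : forall X Y Z W (f : Mor X Y) (g : Mor Y Z) (h : Mor Z W),
      comp h (comp g f) = comp (comp h g) f;
  comp1m : forall X Y (f : Mor X Y), comp (idm Y) f = f;
  compm1 : forall X Y (f : Mor X Y), comp f (idm X) = f;
  compDl : forall X Y Z (f : Mor X Y) (g1 g2 : Mor Y Z),
      comp (g1 + g2) f = comp g1 f + comp g2 f;
  compDr : forall X Y Z (f1 f2 : Mor X Y) (g : Mor Y Z),
      comp g (f1 + f2) = comp g f1 + comp g f2;
  zobj : Obj;
  zobj_term : forall X (f : Mor X zobj), f = 0;
  zobj_init : forall X (f : Mor zobj X), f = 0;
  biprod : forall X Y, exists P (i1 : Mor X P) (i2 : Mor Y P) (p1 : Mor P X)
      (p2 : Mor P Y), [/\ comp p1 i1 = idm X, comp p2 i2 = idm Y,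
      comp p1 i2 = 0, comp p2 i1 = 0 & comp i1 p1 + comp i2 p2 = idm P]
}.
Arguments comp {_ X Y Z}.
Arguments idm {_}.
Arguments zobj {_}.

Definition isiso (C : addcat) (X Y : Obj C) (f : Mor X Y) :=
  exists g : Mor Y X, comp g f = idm X /\ comp f g = idm Y.

Record suspension (C : addcat) := Suspension {
  Sg : Obj C -> Obj C;
  Sgm : forall X Y : Obj C, Mor X Y -> Mor (Sg X) (Sg Y);
  SgmD : forall X Y (f g : Mor X Y), Sgm (f + g) = Sgm f + Sgm g;
  Sgm1 : forall X, Sgm (idm X) = idm (Sg X);
  SgmM : forall X Y Z (f : Mor X Y) (g : Mor Y Z), Sgm (comp g f) = comp (Sgm g) (Sgm f);
  Sgm_inj : forall X Y (f g : Mor X Y), Sgm f = Sgm g -> f = g;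
  Sgm_surj : forall X Y (g : Mor (Sg X) (Sg Y)), exists f, Sgm f = g;
  Sg_esurj : forall Y, exists W (u : Mor (Sg W) Y), isiso u
}.
Arguments Sg {C}.
Arguments Sgm {C} s {X Y}.

Definition shn (C : addcat) (S : suspension C) (n : nat) (Y : Obj C) : Obj C :=
  iter n (Sg S) Y.

Fixpoint shm (C : addcat) (S : suspension C) (n : nat) (X Y : Obj C)
  (f : Mor X Y) : Mor (shn S n X) (shn S n Y) :=
  match n with 0 => f | n'.+1 => Sgm S (shm S n' f) end.

Definition castH (C : addcat) (X A B : Obj C) (e : A = B) (f : Mor X A) : Mor X B :=
  eq_rect A (fun B => Mor X B) f B e.

Record triangulated (C : addcat) (S : suspension C) := Triangulated {
  dist : forall X Y Z : Obj C, Mor X Y -> Mor Y Z -> Mor Z (Sg S X) -> Prop;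
  TR1_id : forall X, dist (idm X) (0 : Mor X zobj) 0;
  TR1_cone : forall X Y (f : Mor X Y), exists Z (g : Mor Y Z) (h : Mor Z (Sg S X)),
      dist f g h;
  TR1_iso : forall X Y Z X' Y' Z' (f : Mor X Y) (g : Mor Y Z) (h : Mor Z (Sg S X))
      (f' : Mor X' Y') (g' : Mor Y' Z') (h' : Mor Z' (Sg S X'))
      (a : Mor X X') (b : Mor Y Y') (c : Mor Z Z'),
      isiso a -> isiso b -> isiso c ->
      comp f' a = comp b f -> comp g' b = comp c g -> comp h' c = comp (Sgm S a) h ->
      dist f g h -> dist f' g' h';
  TR2 : forall X Y Z (f : Mor X Y) (g : Mor Y Z) (h : Mor Z (Sg S X)),
      dist f g h <-> dist g h (- Sgm S f);
  TR3 : forall X Y Z X' Y' Z' (f : Mor X Y) (g : Mor Y Z) (h : Mor Z (Sg S X))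
      (f' : Mor X' Y') (g' : Mor Y' Z') (h' : Mor Z' (Sg S X'))
      (a : Mor X X') (b : Mor Y Y'),
      dist f g h -> dist f' g' h' -> comp f' a = comp b f ->
      exists c : Mor Z Z', comp g' b = comp c g /\ comp h' c = comp (Sgm S a) h;
  TR4 : forall X Y Z Z' X' Y' (f : Mor X Y) (g : Mor Y Z)
      (u : Mor Y Z') (u' : Mor Z' (Sg S X))
      (v : Mor Z X') (v' : Mor X' (Sg S Y))
      (w : Mor Z Y') (w' : Mor Y' (Sg S X)),
      dist f u u' -> dist g v v' -> dist (comp g f) w w' ->
      exists (p : Mor Z' Y') (q : Mor Y' X'),
        [/\ dist p q (comp (Sgm S u) v'), comp p u = comp w g, comp w' p = u',
            comp q w = v & comp v' q = comp (Sgm S f) w']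
}.
Arguments dist {C S} _ {X Y Z}.

(* R-linear structure: a graded ring map R -> graded centre of T      *)
(* phi n a Y = phi_Y(a) : Y -> Sigma^n Y  for a in R^n                *)
Record rlinear (Rg : gcring) (C : addcat) (S : suspension C) := RLinear {
  phi : forall (n : nat) (a : Rg) (Y : Obj C), Mor Y (shn S n Y);
  phiD : forall n a b Y, gdeg n a -> gdeg n b -> phi n (a + b) Y = phi n a Y + phi n b Y;
  phi1 : forall Y, phi 0 1 Y = idm Y;
  phi_nat : forall n a, gdeg n a -> forall Y Y' (f : Mor Y Y'),
      comp (phi n a Y') f = comp (shm S n f) (phi n a Y);
  phi_susp : forall n a, gdeg n a -> forall Y,
      phi n a (Sg S Y) = castH (iterSr n (Sg S) Y) (Sgm S (phi n a Y)) *~ ((-1) ^+ n);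
  phiM : forall m n a b, gdeg m a -> gdeg n b -> forall Y,
      phi (m + n) (a * b) Y
      = castH (esym (iterD m n (Sg S) Y)) (comp (phi m a (shn S n Y)) (phi n b Y))
}.
Arguments phi {Rg C S} _ n a Y.

Section Length.
Variables (Rg : gcring) (V : zmodType) (act : Rg -> V -> V).

Definition submod (P : V -> Prop) :=
  [/\ P 0, forall u v, P u -> P v -> P (u + v), forall u, P u -> P (- u)
    & forall r u, gdeg 0 r -> P u -> P (act r u)].

Definition has_chain (l : nat) :=
  exists M : nat -> V -> Prop, (forall i, submod (M i)) /\
    forall i, (i < l)%N -> (forall u, M i u -> M i.+1 u) /\ exists u, M i.+1 u /\ ~ M i u.

Definition length_is (l : nat) := has_chain l /\ ~ has_chain l.+1.
Definition finite_length := exists l, length_is l.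
(* the length (meaningful only when finite) *)
Definition mlength : nat := epsilon (inhabits 0%N) length_is.
End Length.

Definition hact (Rg : gcring) (C : addcat) (S : suspension C) (L : rlinear Rg S)
  (X W : Obj C) (r : Rg) (f : Mor X W) : Mor X W := comp (phi L 0 r W) f.

Definition lam (Rg : gcring) (C : addcat) (S : suspension C) (L : rlinear Rg S)
  (X Y : Obj C) (n : nat) : nat := mlength (@hact Rg C S L X (shn S n Y)).

(* lambda^n(X, Y) < oo for every integer n.  For n = -m < 0, Sigma^{-m} Y is
   any object W with Sigma^m W isomorphic to Y (Sigma is an equivalence). *)
Definition lam_finite_all (Rg : gcring) (C : addcat) (S : suspension C) (L : rlinear Rg S)
  (X Y : Obj C) :=
  (forall n : nat, finite_length (@hact Rg C S L X (shn S n Y))) /\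
  (forall (m : nat) (W : Obj C) (u : Mor (shn S m W) Y), isiso u ->
      finite_length (@hact Rg C S L X W)).

Definition ses (Rg : gcring) (A B D : zmodType)
  (actA : Rg -> A -> A) (actB : Rg -> B -> B) (actD : Rg -> D -> D) :=
  exists (al : A -> B) (be : B -> D),
    [/\ (forall x y, al (x + y) = al x + al y),
        (forall x y, be (x + y) = be x + be y),
        (forall r x, gdeg 0 r -> al (actA r x) = actB r (al x))
      & (forall r x, gdeg 0 r -> be (actB r x) = actD r (be x))] /\
    [/\ injective al, (forall y, exists x, be x = y)
      & (forall y, be y = 0 <-> exists x, al x = y)].

Definition herbrand (Rg : gcring) (C : addcat) (S : suspension C) (L : rlinear Rg S)
  (d : nat) (X Y : Obj C) (n : nat) : int :=
  \sum_(i < d) (-1) ^+ (n + i) * (lam L X Y (n + i))%:Z.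

Fixpoint Delta (d s : nat) (f : nat -> int) : nat -> int :=
  match s with
  | 0 => f
  | s'.+1 => fun n => Delta d s' f (n + d) - Delta d s' f n
  end.

From Stdlib Require Import Classical ClassicalEpsilon.
From mathcomp Require Import all_boot all_algebra.
From mathcomp Require Import ring.
Set Implicit Arguments. Unset Strict Implicit. Unset Printing Implicit Defensive.
Import GRing.Theory.
Local Open Scope ring_scope.

(* Length is additive on short exact sequences 0 -> A -> B -> D -> 0: a chain
   in A followed by the preimage of a chain in D is a chain in B, and
   conversely every strict step of a chain in B is strict either on its
   preimages in A or on its images in D.  Applied to the given sequences this
   yields lambda^(n+d)(X,Y) = lambda^n(X,Y) + lambda^n(X,Y//z) for n >> 0.
   As d is even, (-1)^(n+d+i) = (-1)^(n+i), so the Herbrand differences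
   subtract termwise, and Delta commutes with eventual equalities. *)

Section Chains.
Variables (Rg : gcring) (V : zmodType) (act : Rg -> V -> V).

Definition is_chain (M : nat -> V -> Prop) (l : nat) :=
  (forall i, submod act (M i)) /\
  forall i, (i < l)%N -> (forall u, M i u -> M i.+1 u) /\ exists u, M i.+1 u /\ ~ M i u.

Lemma has_chain0 : has_chain act 0.
Proof. by exists (fun _ _ => True); split=> // i. Qed.

Lemma has_chain_le l k : (k <= l)%N -> has_chain act l -> has_chain act k.
Proof.
by move=> kl [M [HM Hs]]; exists M; split=> // i ik; apply: Hs; apply: leq_trans ik kl.
Qed.

Lemma is_chain_rcons M c (P : V -> Prop) : is_chain M c -> submod act P ->
    (forall u, M c u -> P u) -> (exists u, P u /\ ~ M c u) ->
  is_chain (fun i => if (i <= c)%N then M i else P) c.+1.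
Proof.
move=> [HM Hs] HP inc [u [Pu Mu]]; split=> [i|i]; first by case: (i <= c)%N.
rewrite ltnS => ic; rewrite ic; case: (ltnP i c) => [|ci]; first exact: Hs.
have -> : i = c by apply/eqP; rewrite eqn_leq ic ci.
by split=> //; exists u.
Qed.

Lemma length_is_max l k : length_is act l -> has_chain act k -> (k <= l)%N.
Proof.
by move=> [_ hl] hk; rewrite leqNgt; apply/negP => lk; apply/hl/(has_chain_le lk).
Qed.

Lemma mlengthE l : length_is act l -> mlength act = l.
Proof.
move=> hl; have hm : length_is act (mlength act).
  exact: (epsilon_spec _ _ (ex_intro _ l hl)).
by apply/eqP; rewrite eqn_leq (length_is_max hm hl.1) (length_is_max hl hm.1).
Qed.

Lemma bounded_chains_finite_length l : ~ has_chain act l -> finite_length act.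
Proof.
elim: l => [|l IHl] hl; first by case: hl; apply: has_chain0.
by case: (classic (has_chain act l)) => [hc|]; [exists l | apply: IHl].
Qed.

End Chains.

Section LinearMaps.
Variables (Rg : gcring) (A B : zmodType) (actA : Rg -> A -> A) (actB : Rg -> B -> B).
Variable f : A -> B.
Hypotheses (fD : {morph f : x y / x + y})
  (fA : forall r x, gdeg 0 r -> f (actA r x) = actB r (f x)).

Lemma addmorph0 : f 0 = 0.
Proof. by apply: (addrI (f 0)); rewrite -fD !addr0. Qed.

Lemma addmorphN x : f (- x) = - f x.
Proof. by apply/eqP; rewrite -subr_eq0 opprK -fD addNr addmorph0. Qed.

Lemma submod_image P : submod actA P -> submod actB (fun y => exists2 x, P x & f x = y).
Proof.
move=> [P0 PD PN PA]; split.
- by exists 0; rewrite ?addmorph0.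
- by move=> _ _ [x Px <-] [y Py <-]; exists (x + y); [apply: PD | rewrite fD].
- by move=> _ [x Px <-]; exists (- x); [apply: PN | rewrite addmorphN].
- by move=> r _ r0 [x Px <-]; exists (actA r x); [apply: PA | rewrite fA].
Qed.

Lemma submod_preim P : submod actB P -> submod actA (fun x => P (f x)).
Proof.
move=> [P0 PD PN PA]; split.
- by rewrite addmorph0.
- by move=> x y Px Py; rewrite fD; apply: PD.
- by move=> x Px; rewrite addmorphN; apply: PN.
- by move=> r x r0 Px; rewrite fA //; apply: PA.
Qed.

End LinearMaps.

Section ShortExact.
Variables (Rg : gcring) (A B D : zmodType)
  (actA : Rg -> A -> A) (actB : Rg -> B -> B) (actD : Rg -> D -> D).
Variables (al : A -> B) (be : B -> D).
Hypotheses (alD : {morph al : x y / x + y}) (beD : {morph be : x y / x + y})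
  (alA : forall r x, gdeg 0 r -> al (actA r x) = actB r (al x))
  (beA : forall r x, gdeg 0 r -> be (actB r x) = actD r (be x))
  (al_inj : injective al) (be_surj : forall y, exists x, be x = y)
  (ker_be : forall y, be y = 0 <-> exists x, al x = y).

Lemma be_al x : be (al x) = 0.
Proof. by apply/ker_be; exists x. Qed.

Lemma has_chain_add a b : has_chain actA a -> has_chain actD b -> has_chain actB (a + b).
Proof.
move=> [MA [HA SA]] [MD [HD SD]].
exists (fun i => if (i <= a)%N then fun y => exists2 x, MA i x & al x = y
                 else fun y => MD (i - a)%N (be y)); split.
  move=> i; case: (i <= a)%N.
    exact (submod_image alD alA (HA i)).
  exact (submod_preim beD beA (HD _)).
move=> i iab; case: (ltnP i a) => [ia | ai].
  rewrite (ltnW ia); have [inc [u [u1 u2]]] := SA i ia; split.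
    by move=> _ [x Px <-]; exists x => //; apply: inc.
  by exists (al u); split=> [|[x Px /al_inj e]]; [exists u | apply: u2; rewrite -e].
have ib : (i - a < b)%N by rewrite ltn_subLR.
have [inc [u [u1 u2]]] := SD _ ib.
have [y yu] := be_surj u.
case: (leqP i a) => [ia | ai'].
  have ei : i = a by apply/eqP; rewrite eqn_leq ia ai.
  have MD0 : MD 0%N 0 by case: (HD 0%N).
  subst i; rewrite subnn in inc u1 u2; rewrite subSnn.
  split; first by move=> _ [x _ <-]; rewrite be_al; apply: inc.
  exists y; rewrite yu; split=> // [[x _ alxy]]; apply: u2.
  by rewrite -yu -alxy be_al.
rewrite subSn // in inc u1 u2 *.
by split=> [w|]; [apply: inc | exists y; rewrite yu].
Qed.

(* The invariant of the upper bound, carried along a chain of length k in B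
   whose current top is P. *)
Definition chain_split (P : B -> Prop) (k : nat) :=
  exists a b MA MD, [/\ (k <= a + b)%N, is_chain actA MA a, is_chain actD MD b,
    forall x, MA a x -> P (al x) & forall y, MD b y -> exists2 x, P x & be x = y].

Lemma chain_split0 P : submod actB P -> chain_split P 0.
Proof.
move=> HP; exists 0%N, 0%N, (fun _ x => P (al x)), (fun _ y => exists2 x, P x & be x = y).
split=> //; split=> // _; [exact (submod_preim alD alA HP) | exact (submod_image beD beA HP)].
Qed.

Lemma chain_splitS P P' k : submod actB P -> submod actB P' ->
    (forall u, P u -> P' u) -> (exists u, P' u /\ ~ P u) ->
  chain_split P k -> chain_split P' k.+1.
Proof.
move=> [_ PD _ _] P'sub inc [u [P'u Pu]]; have [_ P'D P'N _] := P'sub.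
move=> [a [b [MA [MD [kab cA cD topA topD]]]]].
have [[x Px bex] | nbe] := classic (exists2 x, P x & be x = be u).
  have [w alw] : exists w, al w = u - x by apply/ker_be; rewrite beD (addmorphN beD) bex subrr.
  exists a.+1, b, (fun i => if (i <= a)%N then MA i else fun x => P' (al x)), MD.
  split=> //.
  - apply: is_chain_rcons => //; first exact (submod_preim alD alA P'sub).
      by move=> y /topA; apply: inc.
    exists w; rewrite alw; split; first by apply/P'D/P'N/inc.
    by move=> /topA; rewrite alw => Pux; apply: Pu; rewrite -(subrK x u); apply: PD.
  - by rewrite ltnn.
  - by move=> y /topD [x0 P0 <-]; exists x0 => //; apply: inc.
exists a, b.+1, MA, (fun i => if (i <= b)%N then MD i else fun y => exists2 x, P' x & be x = y).
split=> //.
- by rewrite addnS ltnS.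
- apply: is_chain_rcons => //; first exact (submod_image beD beA P'sub).
    by move=> y /topD [x0 P0 <-]; exists x0 => //; apply: inc.
  by exists (be u); split=> [|/topD]; [exists u | apply: nbe].
- by move=> x /topA; apply: inc.
- by rewrite ltnn.
Qed.

Lemma is_chain_split M k : is_chain actB M k -> chain_split (M k) k.
Proof.
elim: k => [|k IHk] [HM SM]; first exact: chain_split0.
have [inc top] := SM k (ltnSn k).
apply: chain_splitS inc top (IHk _) => //.
by split=> // i ik; apply/SM/ltnW.
Qed.

Lemma mlength_ses : finite_length actA -> finite_length actB ->
  mlength actB = (mlength actA + mlength actD)%N.
Proof.
move=> [la hA] [lb hB].
have [ld hD] : finite_length actD.
  apply: (@bounded_chains_finite_length _ _ _ lb.+1) => hc.
  by apply: hB.2; rewrite -[lb.+1]add0n; apply: has_chain_add (has_chain0 _) hc.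
rewrite (mlengthE hA) (mlengthE hB) (mlengthE hD).
apply/eqP; rewrite eqn_leq (length_is_max hB (has_chain_add hA.1 hD.1)) andbT.
have [M /is_chain_split [a [b [MA [MD [kab cA cD _ _]]]]]] := hB.1.
apply: (leq_trans kab); apply: leq_add.
  by apply: (length_is_max hA); exists MA.
by apply: (length_is_max hD); exists MD.
Qed.

End ShortExact.

Lemma ses_mlength (Rg : gcring) (A B D : zmodType)
    (actA : Rg -> A -> A) (actB : Rg -> B -> B) (actD : Rg -> D -> D) :
  ses actA actB actD -> finite_length actA -> finite_length actB ->
  mlength actB = (mlength actA + mlength actD)%N.
Proof.
by move=> [al [be [[alD beD alA beA] [al_inj be_surj ker_be]]]]; apply: mlength_ses.
Qed.

Lemma alternating_window_sub (d N : nat) (f g : nat -> nat) : ~~ odd d ->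
    (forall n, (N <= n)%N -> f (n + d)%N = (f n + g n)%N) ->
  forall n, (N <= n)%N ->
    \sum_(i < d) (-1) ^+ (n + i) * (g (n + i)%N)%:Z
    = \sum_(i < d) (-1) ^+ (n + d + i) * (f (n + d + i)%N)%:Z
      - \sum_(i < d) (-1) ^+ (n + i) * (f (n + i)%N)%:Z.
Proof.
move=> d_even fg n Nn; rewrite -sumrB; apply: eq_bigr => i _.
have -> : (-1) ^+ (n + d + i) = (-1) ^+ (n + i) :> int.
  by rewrite -signr_odd -[RHS]signr_odd addnAC oddD (negbTE d_even) addbF.
by rewrite addnAC fg ?(leq_trans Nn (leq_addr _ _)) // PoszD; ring.
Qed.

Lemma Delta_sub_shift d s (f : nat -> int) n :
  Delta d s (fun m => f (m + d)%N - f m) n = Delta d s f (n + d)%N - Delta d s f n.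
Proof. by elim: s n => [|s IHs] n //=; rewrite !IHs; ring. Qed.

Lemma Delta_eventually_eq d s (f g : nat -> int) N :
    (forall n, (N <= n)%N -> f n = g n) ->
  forall n, (N <= n)%N -> Delta d s f n = Delta d s g n.
Proof.
move=> fg; elim: s => [|s IHs] n Nn //=; first exact: fg.
by rewrite !IHs // (leq_trans Nn (leq_addr _ _)).
Qed.

Theorem lemma3p4 (Rg : gcring) (C : addcat) (S : suspension C)
  (T : triangulated S) (L : rlinear Rg S)
  (X Y : Obj C) (d : nat) (z : Rg)
  (Yz : Obj C) (g : Mor (shn S d Y) Yz) (h : Mor Yz (Sg S Y)) :
  (0 < d)%N -> ~~ odd d -> gdeg d z ->
  dist T (phi L d z Y) g h ->
  lam_finite_all L X Y ->
  (exists N : nat, forall n : nat, (N <= n)%N ->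
     ses (@hact Rg C S L X (shn S n Y))
         (@hact Rg C S L X (shn S (n + d) Y))
         (@hact Rg C S L X (shn S n Yz))) ->
  (exists N : nat, forall n : nat, (N <= n)%N ->
     herbrand L d X Yz n = herbrand L d X Y (n + d) - herbrand L d X Y n) /\
  (forall s : nat, (1 <= s)%N -> exists N : nat, forall n : nat, (N <= n)%N ->
     Delta d s.-1 (herbrand L d X Yz) n = Delta d s (herbrand L d X Y) n).
Proof.
move=> _ d_even _ _ [fin _] [N hses].
have lam_add n : (N <= n)%N -> lam L X Y (n + d) = (lam L X Y n + lam L X Yz n)%N.
  by move=> Nn; apply: ses_mlength (hses n Nn) (fin n) (fin (n + d)%N).
have herbrand_sub := alternating_window_sub d_even lam_add.
split; first by exists N.
case=> // s _; exists N => n Nn /=.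
by rewrite -Delta_sub_shift; apply: Delta_eventually_eq Nn.
Qed.
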